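(* Let $G$ be a graph with vertex set $V$ and let $S,T$ be disjoint subsets of $V$. Then there exist a graph $G'$ on $V$ with $d_{G'}(v)=d_G(v)$ for all $v\in V$, and disjoint subsets $S',T'\subseteq V$ with $|S'|=|S|$ and $|T'|=|T|$, such that $d_{G'}(s)\le d_{G'}(v)$ for all $s\in S'$ and $v\in V\setminus S'$, $d_{G'}(t)\ge d_{G'}(v)$ for all $t\in T'$ and $v\in V\setminus T'$, and \[|E_{G'}(S';V\setminus T')|\le|E_G(S;V\setminus T)|.\]
   Context: All graphs are finite and simple; $d_G(v)$ is the degree of $v$ in $G$. For disjoint $S,T\subseteq V$, $E_G(S;V\setminus T)$ denotes the set of edges of $G$ that either have both endpoints in $S$, or have one endpoint in $S$ and the other in $V\setminus(S\cup T)$. *)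

From mathcomp Require Import all_boot.
Set Implicit Arguments. Unset Strict Implicit. Unset Printing Implicit Defensive.

Definition simple_graph (V : finType) (e : rel V) : Prop :=
  symmetric e /\ irreflexive e.

Definition deg (V : finType) (e : rel V) (v : V) : nat := #|[set u | e v u]|.

Definition edges (V : finType) (e : rel V) : {set {set V}} :=
  [set E : {set V} | [exists x, exists y, e x y && (E == [set x; y])]].

(* E_G(S; V \ T): edges with both ends in S, or one end in S and the other
   in V \ (S ∪ T). *)
Definition E_ST (V : finType) (e : rel V) (S T : {set V}) : {set {set V}} :=
  [set E : {set V} | [exists x, exists y,
     [&& e x y, E == [set x; y], x \in S &
         (y \in S) || (y \notin S :|: T)]]].

From mathcomp Require Import all_boot fingroup perm zify.
Set Implicit Arguments. Unset Strict Implicit. Unset Printing Implicit Defensive.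

(* Suppose some q outside S has smaller degree than some p outside T, and p is
   in S or q is in T.  Relabel the graph by the transposition (p q): q now plays
   the role of p in S (or p that of q in T), but the degrees of p and q are
   exchanged.  To restore them, take C = {p, q} together with d(p) - d(q)
   neighbours of q that are not neighbours of p, and swap p and q only on edges
   inside C; this moves those edges from q to p.  As p is not in the new S and q
   is not in the new T, each moved edge that counts in E(S'; V \ T') already
   counted before the move.  Every such exchange decreases the sum of the
   degrees over S and over V \ T, so after finitely many exchanges S has the
   smallest and T the largest degrees. *)

Section FinsetFacts.
Variable T : finType.
Implicit Types (A X Y : {set T}) (p q : T).

Lemma exists_subset_card A k : k <= #|A| -> exists2 B : {set T}, B \subset A & #|B| = k.
Proof.
elim: k => [|k IH] lt_kA; first by exists set0; rewrite ?sub0set ?cards0.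
have [B sBA cardB] := IH (ltnW lt_kA).
have /card_gt0P [x] : 0 < #|A :\: B| by rewrite cardsD (setIidPr sBA) cardB subn_gt0.
rewrite inE => /andP [xNB xA].
by exists (x |: B); rewrite ?subUset ?sub1set ?xA ?cardsU1 ?xNB ?cardB.
Qed.

Lemma exists_subset_setD X Y :
  #|Y| <= #|X| -> exists2 A : {set T}, A \subset X :\: Y & #|X :\: A| = #|Y|.
Proof.
move=> leYX.
have [|A sA cardA] := @exists_subset_card (X :\: Y) (#|X| - #|Y|).
  by rewrite cardsD leq_sub2l // subset_leq_card // subsetIr.
exists A => //; rewrite cardsD (setIidPr (subset_trans sA (subsetDl X Y))) cardA.
by rewrite subKn.
Qed.

Lemma preimset_tperm_id p q A : (p \in A) = (q \in A) -> tperm p q @^-1: A = A.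
Proof. by move=> pqA; apply/setP => z; rewrite inE; case: tpermP => // ->. Qed.

Lemma sum_preimset_tperm (d : T -> nat) p q A : p \in A -> q \notin A ->
  \sum_(x in tperm p q @^-1: A) d x + d p = \sum_(x in A) d x + d q.
Proof.
move=> pA qNA.
have pq : p != q by apply: contraNneq qNA => <-.
have -> : tperm p q @^-1: A = q |: (A :\ p).
  apply/setP => z; rewrite !inE.
  case: tpermP => [->|->|/eqP/negbTE -> /eqP/negbTE ->] //.
    by rewrite eqxx (negbTE qNA) (negbTE pq).
  by rewrite eqxx pA.
rewrite big_setU1 ?inE ?eqxx ?(negbTE qNA) ?andbF //= (big_setD1 p pA) /=.
by rewrite addnAC [d q + d p]addnC addnAC.
Qed.

End FinsetFacts.

Section Edges.
Variable V : finType.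
Implicit Types (e : rel V) (S T E : {set V}).

Definition nbhd e v : {set V} := [set u | e v u].

Lemma edgesP e E : reflect (exists x y, e x y /\ E = [set x; y]) (E \in edges e).
Proof.
rewrite inE; apply: (iffP existsP) =>
  [[x /existsP [y /andP [exy /eqP ->]]]|[x [y [exy ->]]]].
  by exists x, y.
by exists x; apply/existsP; exists y; rewrite exy eqxx.
Qed.

Lemma edges_mem e E v : symmetric e -> E \in edges e -> v \in E ->
  exists2 w, e v w & E = [set v; w].
Proof.
move=> esym /edgesP [x [y [exy ->]]] /set2P [] ->; first by exists y.
by exists x; rewrite 1?esym // setUC.
Qed.

Lemma E_STP e S T E :
  reflect (exists x y,
             [/\ e x y, E = [set x; y], x \in S & (y \in S) || (y \notin S :|: T)])
          (E \in E_ST e S T).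
Proof.
rewrite inE; apply: (iffP existsP) => [[x /existsP [y /and4P [exy /eqP ES xS yST]]]|].
  by exists x, y.
by case=> x [y [exy -> xS yST]]; exists x; apply/existsP; exists y; rewrite exy eqxx xS.
Qed.

Definition E_ST_cond S T E := (E :&: S != set0) && [disjoint E & T :\: S].

Lemma E_STE e S T : symmetric e -> E_ST e S T = [set E in edges e | E_ST_cond S T E].
Proof.
move=> esym; apply/setP => E; rewrite [in RHS]inE /E_ST_cond; apply/E_STP/and3P.
  case=> x [y [exy -> xS yST]]; split; first by apply/edgesP; exists x, y.
    by apply/set0Pn; exists x; rewrite !inE eqxx xS.
  rewrite disjoint_subset; apply/subsetP => z /set2P [] ->; rewrite !inE ?xS //.
  by move: yST; rewrite !inE; case: (y \in S).
case=> Ee /set0Pn [x /setIP [xE xS]] ETS.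
have [y exy Exy] := edges_mem esym Ee xE; exists x, y; split => //.
have : y \notin T :\: S by rewrite (disjointFr ETS) // Exy set22.
by rewrite !inE; case: (y \in S).
Qed.

End Edges.

Section Relabel.
Variables (V : finType) (f : {perm V}).
Implicit Types (e : rel V) (S T : {set V}).

Definition relabel e : rel V := fun x y => e (f x) (f y).

Lemma relabel_simple e : simple_graph e -> simple_graph (relabel e).
Proof. by case=> esym eirr; split=> [x y|x]; [apply: esym|apply: eirr]. Qed.

Lemma deg_relabel e x : deg (relabel e) x = deg e (f x).
Proof.
rewrite /deg -[in RHS](card_preimset _ (@perm_inj _ f)).
by apply: eq_card => u; rewrite !inE.
Qed.

Lemma E_ST_relabel e S T :
  #|E_ST (relabel e) (f @^-1: S) (f @^-1: T)| <= #|E_ST e S T|.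
Proof.
rewrite -(card_imset _ (imset_inj (@perm_inj _ f))); apply/subset_leq_card/subsetP.
move=> _ /imsetP [E /E_STP [x [y [exy -> xS yST]]] ->].
apply/E_STP; exists (f x), (f y); split => //; last by move: yST; rewrite !inE.
  by rewrite imsetU1 imset_set1.
by rewrite inE in xS.
Qed.

End Relabel.

Lemma exists_balancing_set (V : finType) (H : rel V) (a b : V) :
  simple_graph H -> deg H b <= deg H a ->
  exists C : {set V}, [/\ a \in C, b \in C,
    #|nbhd H a :\: C| = #|nbhd H b :\: C| & nbhd H b :&: C \subset [set a]].
Proof.
case=> Hsym Hirr le_ba; set C0 := [set a; b].
have capC0 : #|nbhd H a :&: C0| = #|nbhd H b :&: C0|.
  rewrite -(card_preimset _ (@perm_inj _ (tperm a b))); apply: eq_card => z.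
  rewrite !inE; case: tpermP => [->|->|/eqP/negbTE-> /eqP/negbTE->].
  - by rewrite !eqxx !orbT (Hsym a b).
  - by rewrite !Hirr.
  - by rewrite /= !andbF.
have [|A sA cardA] := @exists_subset_setD _ (nbhd H a :\: C0) (nbhd H b :\: C0).
  by rewrite !cardsD capC0 leq_sub2r.
exists (C0 :|: A); split; rewrite ?inE ?eqxx ?orbT //.
  have NbA : [disjoint nbhd H b :\: C0 & A].
    rewrite disjoints_subset; apply/subsetP => z zNb; rewrite in_setC.
    by apply/negP => /(subsetP sA); rewrite inE zNb.
  by rewrite -(setDDl (nbhd H a)) -(setDDl (nbhd H b)) cardA (setDidPl NbA).
apply/subsetP => z; rewrite !inE => /andP [Hbz /orP [/orP [//|/eqP zb]|zA]].
  by rewrite zb Hirr in Hbz.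
by have := subsetP sA z zA; rewrite !inE Hbz; case: (_ || _).
Qed.

Section SwapInside.
Variables (V : finType) (C : {set V}) (a b : V).
Hypotheses (aC : a \in C) (bC : b \in C).
Implicit Types (H : rel V) (S T E : {set V}).
Local Notation t := (tperm a b).

Lemma tperm_in_C x : (t x \in C) = (x \in C).
Proof. by case: tpermP => [->|->|]; rewrite ?aC ?bC. Qed.

Definition swap_in H : rel V :=
  fun x y => if (x \in C) && (y \in C) then H (t x) (t y) else H x y.

Lemma swap_in_sym H : symmetric H -> symmetric (swap_in H).
Proof. by move=> Hsym x y; rewrite /swap_in andbC; case: ifP. Qed.

Lemma swap_in_simple H : simple_graph H -> simple_graph (swap_in H).
Proof.
case=> Hsym Hirr; split; first exact: swap_in_sym.
by move=> x; rewrite /swap_in; case: ifP.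
Qed.

Lemma deg_swap_in H x :
  deg (swap_in H) x = #|nbhd H x :\: C| + #|nbhd H (t x) :&: C|.
Proof.
rewrite /deg -(cardsID C) addnC; congr (_ + _).
  by apply: eq_card => y; rewrite !inE /swap_in; case: (y \in C); rewrite ?andbF.
case xC: (x \in C).
  rewrite -[in RHS](card_preimset _ (@perm_inj _ t)); apply: eq_card => y.
  by rewrite !inE /swap_in xC tperm_in_C; case: (y \in C); rewrite ?andbF.
have -> : t x = x by apply: tpermD; apply: contraFneq xC => <-.
by apply: eq_card => y; rewrite !inE /swap_in xC.
Qed.

Lemma deg_swap_in_tperm H : #|nbhd H a :\: C| = #|nbhd H b :\: C| ->
  forall x, deg (swap_in H) x = deg H (t x).
Proof.
move=> bal x; rewrite deg_swap_in /deg -[in RHS](cardsID C) addnC; congr (_ + _).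
by case: tpermP => [->|->|]; rewrite ?bal.
Qed.

Definition swap_in_set E : {set V} := if E \subset C then t @^-1: E else E.

Lemma swap_in_setK : involutive swap_in_set.
Proof.
move=> E; rewrite /swap_in_set.
have [EC|ECn] := boolP (E \subset C); last by rewrite /= (negbTE ECn).
have -> : t @^-1: E \subset C.
  by apply/subsetP => z; rewrite inE => /(subsetP EC); rewrite tperm_in_C.
by apply/setP => z; rewrite !inE tpermK.
Qed.

Lemma swap_in_set_edges H E : E \in edges (swap_in H) -> swap_in_set E \in edges H.
Proof.
case/edgesP => x [y [sxy ->]]; apply/edgesP; rewrite /swap_in_set subUset !sub1set.
move: sxy; rewrite /swap_in; case: ifP => [xyC Hxy|_ Hxy]; last by exists x, y.
exists (t x), (t y); split => //; apply/setP => z.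
by rewrite !inE !(can2_eq (tpermK a b) (tpermK a b)).
Qed.

Lemma E_ST_cond_tperm S T E : b \notin S -> a \notin T -> (a \in E -> b \in E) ->
  E_ST_cond S T E -> E_ST_cond S T (t @^-1: E).
Proof.
move=> bNS aNT abE /andP [/set0Pn [z /setIP [zE zS]] ETS]; apply/andP; split.
  apply/set0Pn; exists z; rewrite !inE zS andbT.
  case: tpermP => [za|zb|//]; first by apply: abE; rewrite -za.
  by move: bNS; rewrite -zb zS.
rewrite disjoints_subset; apply/subsetP => x; rewrite inE in_setC => txE.
apply/negP; move: txE; case: tpermP => [->|->|_ _] xE xTS.
- by move: xTS; rewrite inE (negbTE aNT) andbF.
- by rewrite (disjointFr ETS (abE xE)) in xTS.
- by rewrite (disjointFr ETS xE) in xTS.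
Qed.

Lemma E_ST_swap_in H S T : symmetric H -> b \notin S -> a \notin T ->
  nbhd H b :&: C \subset [set a] -> #|E_ST (swap_in H) S T| <= #|E_ST H S T|.
Proof.
move=> Hsym bNS aNT NbC.
rewrite -(card_imset _ (can_inj swap_in_setK)).
rewrite (E_STE S T (swap_in_sym Hsym)) (E_STE S T Hsym).
apply/subset_leq_card/subsetP => _ /imsetP [E /setIdP [Eedge Econd] ->].
apply/setIdP; split; first exact: swap_in_set_edges.
rewrite /swap_in_set; case: ifP => EC //.
apply: E_ST_cond_tperm => // aE.
have [w sw Ew] := edges_mem (swap_in_sym Hsym) Eedge aE.
have wC : w \in C by apply: (subsetP EC); rewrite Ew set22.
have : t w \in nbhd H b :&: C.
  by move: sw; rewrite !inE tperm_in_C wC andbT /swap_in aC wC tpermL.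
move/(subsetP NbC); rewrite inE => /eqP twa.
by rewrite Ew -(tpermK a b w) twa tpermL set22.
Qed.

End SwapInside.

Section Rearrangement.
Variable V : finType.
Implicit Types (e : rel V) (S T : {set V}).

Record rearrangement e S T e' S' T' : Prop := Rearrangement {
  rearr_simple : simple_graph e';
  rearr_deg : deg e' =1 deg e;
  rearr_disjoint : [disjoint S' & T'];
  rearr_cardS : #|S'| = #|S|;
  rearr_cardT : #|T'| = #|T|;
  rearr_E_ST : #|E_ST e' S' T'| <= #|E_ST e S T| }.

Lemma rearrangement_refl e S T :
  simple_graph e -> [disjoint S & T] -> rearrangement e S T e S T.
Proof. by split. Qed.

Lemma rearrangement_trans e1 S1 T1 e2 S2 T2 e3 S3 T3 :
  rearrangement e1 S1 T1 e2 S2 T2 -> rearrangement e2 S2 T2 e3 S3 T3 ->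
  rearrangement e1 S1 T1 e3 S3 T3.
Proof.
case=> _ d12 _ cS12 cT12 E12 [s3 d23 dj3 cS23 cT23 E23]; split => //.
- by move=> x; rewrite d23 d12.
- by rewrite cS23 cS12.
- by rewrite cT23 cT12.
- exact: leq_trans E23 E12.
Qed.

Lemma exists_tperm_rearrangement e S T p q :
  simple_graph e -> [disjoint S & T] ->
  deg e q <= deg e p -> q \notin S -> p \notin T ->
  exists e', rearrangement e S T e' (tperm p q @^-1: S) (tperm p q @^-1: T).
Proof.
move=> se dST le_qp qNS pNT; set t := tperm p q; set H := relabel t e.
have sH : simple_graph H by apply: relabel_simple.
have [|C [qC pC bal NpC]] := exists_balancing_set (a := q) (b := p) sH.
  by rewrite !deg_relabel /t tpermL tpermR.
exists (swap_in C q p H); split.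
- exact: swap_in_simple.
- by move=> x; rewrite deg_swap_in_tperm // deg_relabel /t [tperm q p]tpermC tpermK.
- rewrite -setI_eq0 -preimsetI; apply/eqP/setP => z.
  by rewrite !inE; apply/negP => /andP [zS zT]; rewrite (disjointFr dST zS) in zT.
- exact: card_preimset perm_inj.
- exact: card_preimset perm_inj.
- apply: leq_trans (E_ST_relabel t e S T); apply: E_ST_swap_in => //.
  + by case: sH.
  + by rewrite inE /t tpermL.
  + by rewrite inE /t tpermR.
Qed.

Definition degree_extremal e S T :=
  (forall s v, s \in S -> v \notin S -> deg e s <= deg e v) /\
  (forall t v, t \in T -> v \notin T -> deg e v <= deg e t).

Lemma extremal_or_exchangeable e S T : [disjoint S & T] ->
  degree_extremal e S T \/
  exists p q, [/\ deg e q < deg e p, q \notin S, p \notin T & (p \in S) || (q \in T)].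
Proof.
move=> dST.
have [[s v] /and3P [/= sS vNS lt_vs] | extS] :=
  pickP [pred sv : V * V | [&& sv.1 \in S, sv.2 \notin S & deg e sv.2 < deg e sv.1]].
  by right; exists s, v; rewrite lt_vs vNS (disjointFr dST sS) sS.
have [[t v] /and3P [/= tT vNT lt_tv] | extT] :=
  pickP [pred tv : V * V | [&& tv.1 \in T, tv.2 \notin T & deg e tv.1 < deg e tv.2]].
  by right; exists v, t; rewrite lt_tv vNT (disjointFl dST tT) tT orbT.
left; split=> [s v sS vNS|t v tT vNT]; rewrite leqNgt; apply/negP => lt.
- by have := extS (s, v); rewrite /= sS vNS lt.
- by have := extT (t, v); rewrite /= tT vNT lt.
Qed.

Definition weight (d : V -> nat) S T := \sum_(x in S) d x + \sum_(x in ~: T) d x.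

Lemma eq_weight d1 d2 S T : d1 =1 d2 -> weight d1 S T = weight d2 S T.
Proof. by move=> d12; rewrite /weight !(eq_bigr _ (fun x _ => d12 x)). Qed.

Lemma weight_tperm (d : V -> nat) S T p q :
  d q < d p -> q \notin S -> p \notin T -> (p \in S) || (q \in T) ->
  weight d (tperm p q @^-1: S) (tperm p q @^-1: T) < weight d S T.
Proof.
move=> lt_qp qNS pNT pSqT; rewrite /weight -preimsetC.
have sumS : \sum_(x in tperm p q @^-1: S) d x + (p \in S) * d p =
            \sum_(x in S) d x + (p \in S) * d q.
  have [pS|pNS] := boolP (p \in S); first by rewrite !mul1n sum_preimset_tperm.
  by rewrite preimset_tperm_id // (negbTE pNS) (negbTE qNS).
have sumT : \sum_(x in tperm p q @^-1: ~: T) d x + (q \in T) * d p =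
            \sum_(x in ~: T) d x + (q \in T) * d q.
  have [qT|qNT] := boolP (q \in T).
    by rewrite !mul1n sum_preimset_tperm ?inE ?qT.
  by rewrite preimset_tperm_id ?inE ?pNT ?qNT.
by move: pSqT sumS sumT; case: (p \in S); case: (q \in T) => //=; lia.
Qed.

Lemma exists_extremal_rearrangement e S T : simple_graph e -> [disjoint S & T] ->
  exists e' S' T', rearrangement e S T e' S' T' /\ degree_extremal e' S' T'.
Proof.
move Dn: (weight (deg e) S T) => n.
elim/ltn_ind: n e S T Dn => n IH e S T Dn se dST.
have [ext|[p [q [lt_qp qNS pNT pSqT]]]] := extremal_or_exchangeable e dST.
  by exists e, S, T; split; first exact: rearrangement_refl.
have [e1 r1] := exists_tperm_rearrangement se dST (ltnW lt_qp) qNS pNT.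
have lt_n : weight (deg e1) (tperm p q @^-1: S) (tperm p q @^-1: T) < n.
  by rewrite -Dn (eq_weight _ _ (rearr_deg r1)) weight_tperm.
have [e' [S' [T' [r' ext']]]] :=
  IH _ lt_n e1 _ _ erefl (rearr_simple r1) (rearr_disjoint r1).
by exists e', S', T'; split; first exact: rearrangement_trans r1 r'.
Qed.

End Rearrangement.

Theorem lemma15 (V : finType) (e : rel V) (S T : {set V}) :
  simple_graph e -> [disjoint S & T] ->
  exists (e' : rel V) (S' T' : {set V}),
    simple_graph e' /\
    (forall v, deg e' v = deg e v) /\
    [disjoint S' & T'] /\ #|S'| = #|S| /\ #|T'| = #|T| /\
    (forall s v, s \in S' -> v \notin S' -> deg e' s <= deg e' v) /\
    (forall t v, t \in T' -> v \notin T' -> deg e' v <= deg e' t) /\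
    #|E_ST e' S' T'| <= #|E_ST e S T|.
Proof.
move=> se dST.
have [e' [S' [T' [[se' de' dST' cS cT hE] [extS extT]]]]] :=
  exists_extremal_rearrangement se dST.
by exists e', S', T'.
Qed.
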